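(* Let $p$ and $q$ be groupoid terms in a set of variables $X$. Then, with each $n_x$ denoting a suitable integer: (i) $p=q$ is in $\Sigma_{1,2,3}$ iff $[p]-[q]=\sum_{x\in X} n_x(\alpha+\beta-\gamma-1)x$ for some integers $n_x$; (ii) $p=q$ is in $\Sigma_{1,2,4}$ iff $[p]-[q]=\sum_{x\in X} n_x(\alpha-\beta+\gamma-1)x$ for some integers $n_x$; (iii) $p=q$ is in $\Sigma_{2,3,4}$ iff $[p]-[q]=\sum_{x\in X} n_x(\alpha+\beta+\gamma+1)x$ for some integers $n_x$.
   Context: Let $f_1(x,y)=x+y$, $f_2(x,y)=x-y$, $f_3(x,y)=-x+y$, $f_4(x,y)=-x-y$ on the integers $\mathbb{Z}$. For $K\subseteq\{1,2,3,4\}$, $\Sigma_K$ (written e.g. $\Sigma_{1,2,3}$) is the set of groupoid identities satisfied in $\mathbb{Z}$ by the operation $f_k$ for every $k\in K$. Let $\mathbf{KL}=\{1,\alpha,\beta,\gamma\}$ be the Klein 4-group ($\alpha^2=\beta^2=1$, $\alpha\beta=\gamma$). For a term $p$ in variables $X$, $[p]$ denotes the element of the free $\mathbb{Z}[\mathbf{KL}]$-module on $X$ obtained by evaluating $p$ with the product $uv$ interpreted as $\alpha u+\beta v$; thus $[p]=\sum_{x\in X} a_x x$ with $a_x\in\mathbb{N}[\mathbf{KL}]$. *)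

From HB Require Import structures.
From mathcomp Require Import all_boot all_order all_algebra.
Set Implicit Arguments. Unset Strict Implicit. Unset Printing Implicit Defensive.
Import Order.TTheory GRing.Theory Num.Theory.
Local Open Scope ring_scope.

Inductive term (X : Type) : Type :=
| Var of X
| Op of term X & term X.
Arguments Var {X} _.
Arguments Op {X} _ _.

Definition fop (k : nat) (x y : int) : int :=
  match k with
  | 1%N => x + y
  | 2%N => x - y
  | 3%N => - x + y
  | _ => - x - y
  end.

Fixpoint eval (X : Type) (f : int -> int -> int) (v : X -> int) (t : term X) : int :=
  match t with
  | Var x => v x
  | Op u w => f (eval f v u) (eval f v w)
  end.

Definition inSigma (X : Type) (K : seq nat) (p q : term X) : Prop :=
  forall k, k \in K -> forall v : X -> int, eval (fop k) v p = eval (fop k) v q.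

(* Klein four-group KL = bool * bool with componentwise xor:
   1 = (false,false), alpha = (true,false), beta = (false,true), gamma = (true,true). *)
Definition KL := (bool * bool)%type.
Definition kmul (g h : KL) : KL := (xorb g.1 h.1, xorb g.2 h.2).
Definition k1 : KL := (false, false).
Definition kalpha : KL := (true, false).
Definition kbeta : KL := (false, true).
Definition kgamma : KL := (true, true).

(* The group ring Z[KL], as finitely supported functions KL -> int. *)
Definition ZKL := {ffun KL -> int}.
Definition kdelta (g : KL) : ZKL := [ffun h => ((h == g) : nat)%:Z].
Definition zkl_mul (a b : ZKL) : ZKL :=
  [ffun g => \sum_(h : KL) a h * b (kmul h g)].

(* Coefficient of x in [p], element of the free Z[KL]-module on X,
   where [uv] = alpha [u] + beta [v]. *)
Fixpoint coef (X : eqType) (t : term X) (x : X) : ZKL :=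
  match t with
  | Var y => if y == x then kdelta k1 else 0
  | Op u w => zkl_mul (kdelta kalpha) (coef u x) + zkl_mul (kdelta kbeta) (coef w x)
  end.

From HB Require Import structures.
From mathcomp Require Import all_boot all_algebra.
From mathcomp Require Import zify ring.
Import GRing.Theory.
Local Open Scope ring_scope.

(* Each f_k is linear, f_k(x, y) = s_a x + s_b y with signs s_a, s_b, so the
   value of a term in (Z, f_k) is obtained from [p] by the character chi_k of
   KL sending alpha to s_a and beta to s_b: evaluating p under v gives
   sum_x chi_k(a_x) v(x).  Hence p = q lies in Sigma_K iff every coefficient of
   [p] - [q] is killed by chi_k for all k in K.  The four operations give the
   four characters of KL, and by orthogonality of characters the common kernel
   in Z[KL] of three of them is spanned by the character sum of the fourth,
   which is (up to sign) the element in the statement. *)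

Definition sign_alpha (k : nat) : int := match k with 1%N | 2%N => 1 | _ => -1 end.
Definition sign_beta (k : nat) : int := match k with 1%N | 3%N => 1 | _ => -1 end.

Lemma fopE k x y : fop k x y = sign_alpha k * x + sign_beta k * y.
Proof. by case: k => [|[|[|[|k]]]]; rewrite /fop /= ?mul1r ?mulN1r. Qed.

Definition chi (k : nat) (a : ZKL) : int :=
  a k1 + sign_alpha k * a kalpha + sign_beta k * a kbeta
  + sign_alpha k * sign_beta k * a kgamma.

Lemma chiB k : {morph chi k : a b / a - b}.
Proof. by move=> a b; rewrite /chi !ffunE /=; ring. Qed.

HB.instance Definition _ (k : nat) :=
  GRing.isZmodMorphism.Build ZKL int (chi k) (chiB k).

Lemma chi_kdelta1 k : chi k (kdelta k1) = 1.
Proof. by rewrite /chi !ffunE /= !mulr0 !addr0. Qed.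

Lemma zkl_mul_kdeltaE g a h : zkl_mul (kdelta g) a h = a (kmul g h).
Proof.
rewrite /zkl_mul ffunE (bigD1 g) //= big1 ?addr0; first by rewrite ffunE eqxx mul1r.
by move=> i /negPf ne; rewrite ffunE ne mul0r.
Qed.

Lemma chi_mul_kalpha k a : chi k (zkl_mul (kdelta kalpha) a) = sign_alpha k * chi k a.
Proof. by rewrite /chi !zkl_mul_kdeltaE; case: k => [|[|[|[|k]]]] /=; ring. Qed.

Lemma chi_mul_kbeta k a : chi k (zkl_mul (kdelta kbeta) a) = sign_beta k * chi k a.
Proof. by rewrite /chi !zkl_mul_kdeltaE; case: k => [|[|[|[|k]]]] /=; ring. Qed.

Section Evaluation.

Variable X : eqType.

Lemma chi_coef_Op k (u w : term X) x :
  chi k (coef (Op u w) x) = sign_alpha k * chi k (coef u x) + sign_beta k * chi k (coef w x).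
Proof. by rewrite /= raddfD /= chi_mul_kalpha chi_mul_kbeta. Qed.

Lemma eval_indicator k (p : term X) x :
  eval (fop k) (fun y => (y == x)%:R) p = chi k (coef p x).
Proof.
elim: p => [y|u IHu w IHw]; last by rewrite chi_coef_Op /= fopE IHu IHw.
by rewrite /=; case: eqP => _; rewrite ?chi_kdelta1 ?raddf0.
Qed.

Fixpoint vars (t : term X) : seq X :=
  match t with Var y => [:: y] | Op u w => vars u ++ vars w end.

Lemma eval_fopE k v (p : term X) (L : seq X) : uniq L -> {subset vars p <= L} ->
  eval (fop k) v p = \sum_(x <- L) chi k (coef p x) * v x.
Proof.
move=> uniqL; elim: p => [y|u IHu w IHw] /= sub_pL.
  rewrite (bigD1_seq y) ?sub_pL ?mem_head //= eqxx chi_kdelta1 mul1r big1 ?addr0 //.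
  by move=> i /negPf ne; rewrite eq_sym ne raddf0 mul0r.
rewrite fopE IHu ?IHw => [|z zw|z zu]; last 2 first.
- by apply: sub_pL; rewrite mem_cat zw orbT.
- by apply: sub_pL; rewrite mem_cat zu.
rewrite !big_distrr -big_split /=; apply: eq_bigr => i _.
by rewrite chi_coef_Op; ring.
Qed.

Lemma inSigmaE K (p q : term X) :
  inSigma K p q <-> forall x k, k \in K -> chi k (coef p x - coef q x) = 0.
Proof.
split=> [Hpq x k kK | Hchi k kK v].
  by rewrite raddfB /= -!eval_indicator (Hpq k kK) subrr.
pose L := undup (vars p ++ vars q).
have sub_pL : {subset vars p <= L} by move=> z zp; rewrite mem_undup mem_cat zp.
have sub_qL : {subset vars q <= L} by move=> z zq; rewrite mem_undup mem_cat zq orbT.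
rewrite !(@eval_fopE k v _ L) ?undup_uniq //; apply/eqP; rewrite -subr_eq0 -sumrB.
by rewrite big1 // => i _; rewrite -mulrBl -(raddfB (chi k)) /= Hchi ?mul0r.
Qed.

End Evaluation.

Lemma ZKL_eqE (a b : ZKL) :
  [/\ a k1 = b k1, a kalpha = b kalpha, a kbeta = b kbeta & a kgamma = b kgamma] ->
  a = b.
Proof. by case=> h1 h2 h3 h4; apply/ffunP => -[[] []]. Qed.

(* The coordinate of [d] along [e] is read off at 1, where [e] takes the value +-1. *)
Definition spans_kernel (K : seq nat) (e : ZKL) : Prop :=
  (forall k, k \in K -> chi k e = 0)
  /\ forall d, (forall k, k \in K -> chi k d = 0) -> d = e *~ (e k1 * d k1).

Lemma inSigma_multipleE (X : eqType) K e (p q : term X) : spans_kernel K e ->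
  inSigma K p q <-> exists n : X -> int, forall x, coef p x - coef q x = e *~ n x.
Proof.
case=> chi_e kerK; rewrite inSigmaE; split=> [Hchi | [n Hn] x k kK].
  by exists (fun x => e k1 * (coef p x - coef q x) k1) => x; apply/kerK/Hchi.
by rewrite Hn raddfMz /= chi_e ?mul0rz.
Qed.

Lemma spans_kernel123 :
  spans_kernel [:: 1%N; 2%N; 3%N]
    (kdelta kalpha + kdelta kbeta - kdelta kgamma - kdelta k1).
Proof.
split=> [k | d Hd].
  by rewrite !inE => /or3P[]/eqP->; rewrite /chi !ffunE.
move: (Hd 1%N isT) (Hd 2%N isT) (Hd 3%N isT); rewrite /chi /= => h1 h2 h3.
by apply: ZKL_eqE; rewrite !ffunMzE !ffunE /= !mulrzz; split; lia.
Qed.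

Lemma spans_kernel124 :
  spans_kernel [:: 1%N; 2%N; 4%N]
    (kdelta kalpha - kdelta kbeta + kdelta kgamma - kdelta k1).
Proof.
split=> [k | d Hd].
  by rewrite !inE => /or3P[]/eqP->; rewrite /chi !ffunE.
move: (Hd 1%N isT) (Hd 2%N isT) (Hd 4%N isT); rewrite /chi /= => h1 h2 h3.
by apply: ZKL_eqE; rewrite !ffunMzE !ffunE /= !mulrzz; split; lia.
Qed.

Lemma spans_kernel234 :
  spans_kernel [:: 2%N; 3%N; 4%N]
    (kdelta kalpha + kdelta kbeta + kdelta kgamma + kdelta k1).
Proof.
split=> [k | d Hd].
  by rewrite !inE => /or3P[]/eqP->; rewrite /chi !ffunE.
move: (Hd 2%N isT) (Hd 3%N isT) (Hd 4%N isT); rewrite /chi /= => h1 h2 h3.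
by apply: ZKL_eqE; rewrite !ffunMzE !ffunE /= !mulrzz; split; lia.
Qed.

Theorem lemma2p1 (X : eqType) (p q : term X) :
  (inSigma [:: 1%N; 2%N; 3%N] p q <->
     exists n : X -> int, forall x : X,
       coef p x - coef q x
       = (kdelta kalpha + kdelta kbeta - kdelta kgamma - kdelta k1) *~ n x)
  /\
  (inSigma [:: 1%N; 2%N; 4%N] p q <->
     exists n : X -> int, forall x : X,
       coef p x - coef q x
       = (kdelta kalpha - kdelta kbeta + kdelta kgamma - kdelta k1) *~ n x)
  /\
  (inSigma [:: 2%N; 3%N; 4%N] p q <->
     exists n : X -> int, forall x : X,
       coef p x - coef q x
       = (kdelta kalpha + kdelta kbeta + kdelta kgamma + kdelta k1) *~ n x).
Proof.
split; [|split]; apply: inSigma_multipleE.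
- exact: spans_kernel123.
- exact: spans_kernel124.
- exact: spans_kernel234.
Qed.
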